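(* Let $\mathbf{uGraph}$ be the category of finite undirected multigraphs and let $\mathcal M$ be the class of its component-wise monic morphisms. Then $(\mathbf{uGraph},\mathcal M)$ is a finitary $\mathcal M$-adhesive category with an $\mathcal M$-initial object, $\mathcal M$-effective unions and an epi-$\mathcal M$-factorization; moreover all final pullback complements (FPCs) of composable pairs of $\mathcal M$-morphisms exist in $\mathbf{uGraph}$, and $\mathcal M$-morphisms are stable under FPCs. (That is, $\mathbf{uGraph}$ satisfies the standing assumptions required both for Double-Pushout (DPO) and for Sesqui-Pushout (SqPO) rewriting.)
   Context: Let $\mathcal P^{(1,2)}:\mathbf{Set}\to\mathbf{Set}$ send a set $S$ to the set of its subsets $P\subseteq S$ with $1\le |P|\le 2$ (and a map to its direct-image map). An object of $\mathbf{uGraph}$ is a triple $G=(E_G,V_G,i_G)$ of finite sets $E_G$ (edges), $V_G$ (vertices) and a map $i_G:E_G\to\mathcal P^{(1,2)}(V_G)$; a morphism $G\to H$ is a pair $(\varphi_E:E_G\to E_H,\varphi_V:V_G\to V_H)$ with $i_H\circ\varphi_E=\mathcal P^{(1,2)}(\varphi_V)\circ i_G$ (i.e. $\mathbf{uGraph}$ is the finitary restriction of the comma category $(\mathrm{Id}_{\mathbf{Set}},\mathcal P^{(1,2)})$). $\mathcal M$ is the class of morphisms whose two components are injective. Terminology: $(\mathbf C,\mathcal M)$ is $\mathcal M$-adhesive if pushouts and pullbacks along $\mathcal M$-morphisms exist, $\mathcal M$ contains all isomorphisms and is stable under pushout, pullback and composition, and pushouts along $\mathcal M$-morphisms are $\mathcal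 M$-van Kampen squares; finitary means every object has finitely many $\mathcal M$-subobjects up to isomorphism; an $\mathcal M$-initial object $\varnothing$ admits a unique $\mathcal M$-morphism $\varnothing\hookrightarrow X$ to every object $X$; $\mathcal M$-effective unions means: if a cospan $(B\hookrightarrow D\hookleftarrow C)$ of $\mathcal M$-morphisms is the pushout of a span $(B\hookleftarrow A\hookrightarrow C)$, then for every cospan $(B\hookrightarrow E\hookleftarrow C)$ of $\mathcal M$-morphisms whose pullback is $(B\hookleftarrow A\hookrightarrow C)$, the induced morphism $D\to E$ is in $\mathcal M$; an epi-$\mathcal M$-factorization means every morphism factors as $m\circ e$ with $e$ epi and $m\in\mathcal M$, uniquely up to isomorphism. For composable $a:A\to B$, $b:B\to D$, a pair $(c:C\to D,d:A\to C)$ is a final pullback complement (FPC) if $(a,d)$ is a pullback of $(b,c)$ and for every pullback $(a\circ p,q)$ of $(b,r)$ (with $r:C'\to D$) there is a morphism $s$ with $r=c\circ s$, unique up to isomorphism; $\mathcal M$ is stable under FPCs if the FPC of a composable pair of $\mathcal M$-morphisms (when it exists) consists of $\mathcal M$-morphisms. *)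

From mathcomp Require Import all_boot.
Set Implicit Arguments. Unset Strict Implicit. Unset Printing Implicit Defensive.

(* An object: finite edge set, finite vertex set, incidence map into
   P^(1,2)(V) = subsets P of V with 1 <= |P| <= 2. *)
Record uGraph := UGraph {
  gE : finType;
  gV : finType;
  ginc : gE -> {set gV};
  ginc_ok : forall e, 0 < #|ginc e| <= 2
}.

Record hom (G H : uGraph) := Hom {
  hE : gE G -> gE H;
  hV : gV G -> gV H;
  hom_ok : forall e : gE G, @ginc H (hE e) = hV @: @ginc G e
}.

Definition heq G H (f g : hom G H) : Prop :=
  hE f =1 hE g /\ hV f =1 hV g.

Definition hid (G : uGraph) : hom G G.
Proof. refine (@Hom G G id id _). move=> e; by rewrite imset_id. Defined.

Definition comp G H K (g : hom H K) (f : hom G H) : hom G K.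
Proof.
refine (@Hom G K (hE g \o hE f) (hV g \o hV f) _).
move=> e /=; by rewrite hom_ok hom_ok imset_comp.
Defined.

Definition inM G H (f : hom G H) : Prop := injective (hE f) /\ injective (hV f).

Definition is_iso G H (f : hom G H) : Prop :=
  exists g : hom H G, heq (comp g f) (hid G) /\ heq (comp f g) (hid H).

Definition is_epi G H (e : hom G H) : Prop :=
  forall W (u v : hom H W), heq (comp u e) (comp v e) -> heq u v.

(* Square   A --f--> B
            |        |
            g        h
            v        v
            C --k--> D      *)
Definition is_pullback A B C D (f : hom A B) (g : hom A C) (h : hom B D) (k : hom C D) : Prop :=
  heq (comp h f) (comp k g) /\
  forall X (x : hom X B) (y : hom X C), heq (comp h x) (comp k y) ->
    exists u : hom X A, [/\ heq (comp f u) x, heq (comp g u) y &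
      forall u' : hom X A, heq (comp f u') x -> heq (comp g u') y -> heq u' u].

Definition is_pushout A B C D (f : hom A B) (g : hom A C) (h : hom B D) (k : hom C D) : Prop :=
  heq (comp h f) (comp k g) /\
  forall X (x : hom B X) (y : hom C X), heq (comp x f) (comp y g) ->
    exists u : hom D X, [/\ heq (comp u h) x, heq (comp u k) y &
      forall u' : hom D X, heq (comp u' h) x -> heq (comp u' k) y -> heq u' u].

(* Bottom face: A -m-> B -g-> D, A -n-> C -f-> D.  Top face primed;
   vertical morphisms a b c d.  Back faces: (m',a,b,m), (n',a,c,n);
   front faces: (g',b,d,g), (f',c,d,f). *)
Definition M_VK A B C D (m : hom A B) (n : hom A C) (g : hom B D) (f : hom C D) : Prop :=
  forall A' B' C' D' (m' : hom A' B') (n' : hom A' C') (g' : hom B' D') (f' : hom C' D')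
         (a : hom A' A) (b : hom B' B) (c : hom C' C) (d : hom D' D),
    heq (comp g' m') (comp f' n') ->
    heq (comp m a) (comp b m') -> heq (comp n a) (comp c n') ->
    heq (comp g b) (comp d g') -> heq (comp f c) (comp d f') ->
    is_pullback m' a b m -> is_pullback n' a c n ->
    inM b -> inM c -> inM d ->
    (is_pushout m' n' g' f' <-> (is_pullback g' b d g /\ is_pullback f' c d f)).

Definition M_adhesive : Prop :=
  (forall A B C (m : hom A B) (n : hom A C), inM m ->
     exists D (g : hom B D) (f : hom C D), is_pushout m n g f) /\
  (forall B C D (g : hom B D) (k : hom C D), inM g ->
     exists A (f : hom A B) (h : hom A C), is_pullback f h g k) /\
  (forall G H (f : hom G H), is_iso f -> inM f) /\
  (forall G H K (f : hom G H) (g : hom H K), inM f -> inM g -> inM (comp g f)) /\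
  (forall A B C D (m : hom A B) (n : hom A C) (g : hom B D) (f : hom C D),
     is_pushout m n g f -> inM m -> inM f) /\
  (forall A B C D (f : hom A B) (g : hom A C) (h : hom B D) (k : hom C D),
     is_pullback f g h k -> inM h -> inM g) /\
  (forall A B C D (m : hom A B) (n : hom A C) (g : hom B D) (f : hom C D),
     inM m -> is_pushout m n g f -> M_VK m n g f).

Definition finitary : Prop :=
  forall X : uGraph, exists (k : nat) (F : 'I_k -> {A : uGraph & hom A X}),
    (forall i, inM (projT2 (F i))) /\
    forall A (m : hom A X), inM m ->
      exists i, exists h : hom A (projT1 (F i)), is_iso h /\ heq (comp (projT2 (F i)) h) m.

Definition has_M_initial : Prop :=
  exists I : uGraph, forall X : uGraph,
    (exists i : hom I X, inM i) /\
    (forall i j : hom I X, inM i -> inM j -> heq i j).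

Definition M_effective_unions : Prop :=
  forall A B C D E (b : hom A B) (c : hom A C) (g : hom B D) (f : hom C D)
         (g' : hom B E) (f' : hom C E),
    inM b -> inM c -> inM g -> inM f -> inM g' -> inM f' ->
    is_pushout b c g f -> is_pullback b c g' f' ->
    forall u : hom D E, heq (comp u g) g' -> heq (comp u f) f' -> inM u.

Definition epi_M_factorization : Prop :=
  forall X Y (f : hom X Y), exists Z (e : hom X Z) (m : hom Z Y),
    [/\ is_epi e, inM m, heq (comp m e) f &
      forall Z' (e' : hom X Z') (m' : hom Z' Y), is_epi e' -> inM m' -> heq (comp m' e') f ->
        exists i : hom Z Z', [/\ is_iso i, heq (comp i e) e' & heq (comp m' i) m]].

Definition is_FPC A B C D (a : hom A B) (b : hom B D) (c : hom C D) (d : hom A C) : Prop :=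
  is_pullback a d b c /\
  forall A' C' (p : hom A' A) (q : hom A' C') (r : hom C' D),
    is_pullback (comp a p) q b r ->
    exists s : hom C' C, [/\ heq (comp c s) r, heq (comp s q) (comp d p) &
      forall s' : hom C' C, heq (comp c s') r -> heq (comp s' q) (comp d p) -> heq s' s].

Definition FPCs_of_M_exist : Prop :=
  forall A B D (a : hom A B) (b : hom B D), inM a -> inM b ->
    exists C (c : hom C D) (d : hom A C), is_FPC a b c d.

Definition M_stable_under_FPC : Prop :=
  forall A B C D (a : hom A B) (b : hom B D) (c : hom C D) (d : hom A C),
    inM a -> inM b -> is_FPC a b c d -> inM c /\ inM d.

(* Everything reduces to sets, one component at a time.  Along a morphism of
   M, pullbacks and pushouts of graphs are computed edgewise and vertexwise: the
   pullback is the subgraph of the edges and vertices landing in the image of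
   the monomorphism, and the pushout of [m] and [n] adjoins to the target of [n]
   the part of the target of [m] outside the image of [m]; in both cases the
   incidence of the apex is forced.  Van Kampen squares and effective unions are
   then the corresponding facts about sets.  Testing a morphism against the
   cokernel pair of its image shows that epimorphisms are the componentwise
   surjections, which gives the image factorization; M-subobjects are
   subgraphs, hence finitely many; the empty graph is M-initial.  Finally the
   final pullback complement of [a] and [b] in M is the largest subgraph of the
   codomain of [b] meeting the image of [b] exactly in the image of [b \o a]. *)

From mathcomp Require Import all_boot.
Set Implicit Arguments. Unset Strict Implicit. Unset Printing Implicit Defensive.

(** * Squares of sets *)

Definition set_pullback (A B C D : Type)
    (f : A -> B) (g : A -> C) (h : B -> D) (k : C -> D) :=
  [/\ forall a, h (f a) = k (g a),
      forall b c, h b = k c -> exists a, f a = b /\ g a = c &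
      forall a a', f a = f a' -> g a = g a' -> a = a'].

(* The shape of a pushout of sets along an injection [m]: [f] is injective and
   [g] identifies only points of the image of [m]. *)
Definition set_pushout (A B C D : Type)
    (m : A -> B) (n : A -> C) (g : B -> D) (f : C -> D) :=
  [/\ forall a, g (m a) = f (n a), injective f,
      forall d, (exists b, g b = d) \/ (exists c, f c = d),
      forall b c, g b = f c -> exists a, m a = b &
      forall b b', g b = g b' -> b = b' \/ exists a, m a = b].

Section SetSquares.
Variables (A B C D : Type).

Lemma set_pullback_injr (f : A -> B) (g : A -> C) (h : B -> D) (k : C -> D) :
  set_pullback f g h k -> injective h -> injective g.
Proof.
case=> sq _ uniq h_inj a a' eq_g; apply: uniq => //.
by apply: h_inj; rewrite !sq eq_g.
Qed.

Lemma set_pullback_injl (f : A -> B) (g : A -> C) (h : B -> D) (k : C -> D) :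
  set_pullback f g h k -> injective k -> injective f.
Proof.
case=> sq _ uniq k_inj a a' eq_f; apply: uniq => //.
by apply: k_inj; rewrite -!sq eq_f.
Qed.

Lemma set_pullback_bij A' (f : A -> B) (g : A -> C) (h : B -> D) (k : C -> D)
    (u : A' -> A) (f' : A' -> B) (g' : A' -> C) :
  set_pullback f g h k -> bijective u -> f' =1 f \o u -> g' =1 g \o u ->
  set_pullback f' g' h k.
Proof.
case=> sq ex uniq [v uK vK] uf ug; split.
- by move=> a; rewrite uf ug sq.
- by move=> b c /ex [a [<- <-]]; exists (v a); rewrite uf ug /= vK.
- by move=> a a'; rewrite !uf !ug => /uniq eq_f /eq_f /(can_inj uK).
Qed.

Lemma set_pushout_bij D' (m : A -> B) (n : A -> C) (g : B -> D) (f : C -> D)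
    (u : D -> D') (g' : B -> D') (f' : C -> D') :
  set_pushout m n g f -> bijective u -> g' =1 u \o g -> f' =1 u \o f ->
  set_pushout m n g' f'.
Proof.
case=> sq f_inj cover glue_mn glue_m u_bij ug uf.
have u_inj := bij_inj u_bij; have [v uK vK] := u_bij.
split.
- by move=> a; rewrite ug uf /= sq.
- by move=> c c'; rewrite !uf => /u_inj /f_inj.
- move=> d'; rewrite -[d']vK.
  by case: (cover (v d')) => [[b <-]|[c <-]]; [left; exists b | right; exists c].
- by move=> b c; rewrite ug uf => /u_inj /glue_mn.
- by move=> b b'; rewrite !ug => /u_inj /glue_m.
Qed.

End SetSquares.

Lemma set_pushout_univ (A B C : Type) (D : finType)
    (m : A -> B) (n : A -> C) (g : B -> D) (f : C -> D)
    (X : Type) (x : B -> X) (y : C -> X) :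
  set_pushout m n g f -> (forall a, x (m a) = y (n a)) ->
  exists u : D -> X, (forall b, u (g b) = x b) /\ (forall c, u (f c) = y c).
Proof.
case=> sq f_inj cover glue_mn glue_m xy.
pose over d (s : B + C) := match s with inl b => g b = d | inr c => f c = d end.
pose value (s : B + C) := match s with inl b => x b | inr c => y c end.
have [sel selP] : exists sel : D -> B + C, forall d, over d (sel d).
  apply: fin_all_exists => d.
  by case: (cover d) => [[b]|[c]]; [exists (inl b) | exists (inr c)].
have xy_glued b c : g b = f c -> x b = y c.
  move=> gbfc; have [a ma] := glue_mn _ _ gbfc; subst b.
  by rewrite xy (f_inj _ _ (etrans (esym gbfc) (sq a))).
have value_over d s s' : over d s -> over d s' -> value s = value s'.
  case: s s' => [b|c] [b'|c'] /= <- => [/esym|/esym|/esym|/esym] eq_d.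
  - case: (glue_m _ _ eq_d) => [->|[a ma]] //; subst b.
    by rewrite xy (xy_glued b' (n a)) // -eq_d sq.
  - by rewrite (xy_glued b c').
  - by rewrite (xy_glued b' c).
  - by rewrite (f_inj _ _ eq_d).
exists (fun d => value (sel d)); split.
- by move=> b; apply: (value_over (g b) _ (inl b)).
- by move=> c; apply: (value_over (f c) _ (inr c)).
Qed.

Section SetCube.
Variables (A B C D A' B' C' D' : Type).
Variables (m : A -> B) (n : A -> C) (g : B -> D) (f : C -> D).
Variables (m' : A' -> B') (n' : A' -> C') (g' : B' -> D') (f' : C' -> D').
Variables (a : A' -> A) (b : B' -> B) (c : C' -> C) (d : D' -> D).
Hypotheses (po : set_pushout m n g f) (b_inj : injective b) (c_inj : injective c).
Hypothesis (top : forall x, g' (m' x) = f' (n' x)).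
Hypotheses (ma : forall x, m (a x) = b (m' x)) (na : forall x, n (a x) = c (n' x)).
Hypotheses (gb : forall x, g (b x) = d (g' x)) (fc : forall x, f (c x) = d (f' x)).
Hypotheses (pbm : set_pullback m' a b m) (pbn : set_pullback n' a c n).

Lemma glued_point_lifts y z : g y = f (c z) -> exists x, n' x = z /\ m (a x) = y.
Proof.
case: po pbn => sq f_inj _ glue_mn _ [_ pbn_ex _] gf.
have [a1 ma1] := glue_mn _ _ gf; subst y.
have /pbn_ex [x [nx ax]] : c z = n a1 by apply: f_inj; rewrite -gf sq.
by exists x; rewrite ax.
Qed.

Lemma front_pullback_left : set_pushout m' n' g' f' -> set_pullback g' b d g.
Proof.
case: po pbm => sq _ _ _ glue_m [_ pbm_ex _] [_ _ cover' _ _].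
split=> [x | z y dz |]; first by rewrite gb.
- case: (cover' z) dz => [[x' <-]|[z' <-]] dz.
  + have [<-|[a1 ma1]] := glue_m _ _ (etrans (gb x') dz); first by exists x'.
    have [x0 [<- ax0]] := pbm_ex _ _ (esym ma1).
    have /glued_point_lifts [x [nx <-]] : g y = f (c (n' x0)).
      by rewrite -dz -gb -ma1 sq -ax0 na.
    by exists (m' x); rewrite ma top nx -top.
  + have [x [nx <-]] := glued_point_lifts (etrans (esym dz) (esym (fc z'))).
    by exists (m' x); rewrite ma top nx.
- by move=> x x' _ /b_inj.
Qed.

Lemma front_pullback_right : set_pushout m' n' g' f' -> set_pullback f' c d f.
Proof.
case: po pbm => sq f_inj _ glue_mn _ [_ pbm_ex _] [_ _ cover' _ _].
split=> [x | z y dz |]; first by rewrite fc.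
- case: (cover' z) dz => [[x' <-]|[z' <-]] dz.
  + have gbfy := etrans (gb x') dz; have [a1 ma1] := glue_mn _ _ gbfy.
    have [x0 [mx0 ax0]] := pbm_ex _ _ (esym ma1).
    exists (n' x0); split; first by rewrite -top mx0.
    by rewrite -na ax0; apply: f_inj; rewrite -gbfy -ma1 sq.
  + by exists z'; split=> //; apply: f_inj; rewrite fc.
- by move=> x x' _ /c_inj.
Qed.

Lemma top_pushout :
  set_pullback g' b d g -> set_pullback f' c d f -> set_pushout m' n' g' f'.
Proof.
case: po pbm => _ f_inj cover glue_mn glue_m [_ pbm_ex _] [_ pb_g _] [_ pb_f _].
split=> //.
- by move=> x x' /(congr1 d); rewrite -!fc => /f_inj /c_inj.
- move=> z; case: (cover (d z)) => [[y]|[y]] /esym.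
  + by case/pb_g=> x [gx _]; left; exists x.
  + by case/pb_f=> x [fx _]; right; exists x.
- move=> x y /(congr1 d); rewrite -gb -fc => /glue_mn [a1 ma1].
  by have [x0 [mx0 _]] := pbm_ex _ _ (esym ma1); exists x0.
- move=> x x' /(congr1 d); rewrite -!gb => /glue_m [/b_inj -> | [a1 ma1]]; first by left.
  by have [x0 [mx0 _]] := pbm_ex _ _ (esym ma1); right; exists x0.
Qed.

Lemma set_van_kampen :
  set_pushout m' n' g' f' <-> set_pullback g' b d g /\ set_pullback f' c d f.
Proof.
split=> [po' | [pb_g pb_f]]; last exact: top_pushout.
by split; [apply: front_pullback_left | apply: front_pullback_right].
Qed.

End SetCube.

Lemma set_effective_union (A B C D E : Type) (b : A -> B) (c : A -> C)
    (g : B -> D) (f : C -> D) (g' : B -> E) (f' : C -> E) (u : D -> E) :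
  set_pushout b c g f -> set_pullback b c g' f' -> injective g' -> injective f' ->
  (forall x, u (g x) = g' x) -> (forall x, u (f x) = f' x) -> injective u.
Proof.
case=> sq _ cover _ _ [_ pb_ex _] g'_inj f'_inj ug uf d1 d2.
case: (cover d1) => [[y1 <-]|[z1 <-]]; case: (cover d2) => [[y2 <-]|[z2 <-]].
- by rewrite !ug => /g'_inj ->.
- by rewrite ug uf => /pb_ex [x [<- <-]].
- by rewrite ug uf => /esym /pb_ex [x [<- <-]].
- by rewrite !uf => /f'_inj ->.
Qed.

(** * Isomorphisms and universal squares in uGraph *)

Lemma heq_comp G H K (g : hom H K) (f : hom G H) (h : hom G K) :
  heq (comp g f) h <->
  (forall e, hE g (hE f e) = hE h e) /\ (forall v, hV g (hV f v) = hV h v).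
Proof. exact: iff_refl. Qed.

Lemma isoP G H (f : hom G H) : is_iso f <-> bijective (hE f) /\ bijective (hV f).
Proof.
split=> [[g [/heq_comp [gfE gfV] /heq_comp [fgE fgV]]] | [[gE' fE fE'] [gV' fV fV']]].
  by split; [exists (hE g) | exists (hV g)].
have ok e : ginc (gE' e) = gV' @: ginc e.
  by rewrite -{2}[e]fE' hom_ok -imset_comp (eq_imset _ fV) imset_id.
by exists (Hom ok); split; split=> x /=; rewrite ?fE ?fE' ?fV ?fV'.
Qed.

Lemma iso_inM G H (f : hom G H) : is_iso f -> inM f.
Proof. by case/isoP=> /bij_inj fE_inj /bij_inj fV_inj. Qed.

Lemma pushout_endo_id A B C D (m : hom A B) (n : hom A C) (g : hom B D) (f : hom C D)
    (v : hom D D) :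
  is_pushout m n g f -> heq (comp v g) g -> heq (comp v f) f -> heq v (hid D).
Proof.
case=> sq U vg vf; have [u [_ _ u_uniq]] := U _ g f sq.
have [idE idV] : heq (hid D) u by apply: u_uniq; split.
by have [vE vV] := u_uniq _ vg vf; split=> x; [rewrite vE idE | rewrite vV idV].
Qed.

Lemma pullback_endo_id A B C D (f : hom A B) (g : hom A C) (h : hom B D) (k : hom C D)
    (v : hom A A) :
  is_pullback f g h k -> heq (comp f v) f -> heq (comp g v) g -> heq v (hid A).
Proof.
case=> sq U fv gv; have [u [_ _ u_uniq]] := U _ f g sq.
have [idE idV] : heq (hid A) u by apply: u_uniq; split.
by have [vE vV] := u_uniq _ fv gv; split=> x; [rewrite vE idE | rewrite vV idV].
Qed.

Lemma pushout_iso A B C D D' (m : hom A B) (n : hom A C) (g : hom B D) (f : hom C D)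
    (g' : hom B D') (f' : hom C D') :
  is_pushout m n g f -> is_pushout m n g' f' ->
  exists u : hom D D', [/\ is_iso u, heq (comp u g) g' & heq (comp u f) f'].
Proof.
move=> po po'; have [sq U] := po; have [sq' U'] := po'.
have [u [ug uf _]] := U _ _ _ sq'; have [w [wg' wf' _]] := U' _ _ _ sq.
move/heq_comp: ug => [ugE ugV]; move/heq_comp: uf => [ufE ufV].
move/heq_comp: wg' => [wgE wgV]; move/heq_comp: wf' => [wfE wfV].
exists u; split=> //; exists w; split.
- apply: (pushout_endo_id po); split=> x /=;
  by rewrite ?ugE ?ufE ?wgE ?wfE ?ugV ?ufV ?wgV ?wfV.
- apply: (pushout_endo_id po'); split=> x /=;
  by rewrite ?ugE ?ufE ?wgE ?wfE ?ugV ?ufV ?wgV ?wfV.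
Qed.

Lemma pullback_iso A A' B C D (f : hom A B) (g : hom A C) (h : hom B D) (k : hom C D)
    (f' : hom A' B) (g' : hom A' C) :
  is_pullback f g h k -> is_pullback f' g' h k ->
  exists u : hom A' A, [/\ is_iso u, heq (comp f u) f' & heq (comp g u) g'].
Proof.
move=> pb pb'; have [sq U] := pb; have [sq' U'] := pb'.
have [u [fu gu _]] := U _ _ _ sq'; have [w [f'w g'w _]] := U' _ _ _ sq.
move/heq_comp: fu => [fuE fuV]; move/heq_comp: gu => [guE guV].
move/heq_comp: f'w => [fwE fwV]; move/heq_comp: g'w => [gwE gwV].
exists u; split=> //; exists w; split.
- apply: (pullback_endo_id pb'); split=> x /=;
  by rewrite ?fuE ?guE ?fwE ?gwE ?fuV ?guV ?fwV ?gwV.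
- apply: (pullback_endo_id pb); split=> x /=;
  by rewrite ?fuE ?guE ?fwE ?gwE ?fuV ?guV ?fwV ?gwV.
Qed.

(** * Subgraphs *)

Lemma card_imset12 (aT rT : finType) (f : aT -> rT) (S : {set aT}) :
  0 < #|S| <= 2 -> 0 < #|f @: S| <= 2.
Proof.
case/andP=> S_gt0 S_le2; rewrite card_gt0 imset_eq0 -card_gt0 S_gt0.
exact: leq_trans (leq_imset_card _ _) S_le2.
Qed.

Section LiftHom.
Variables (X Y Z : uGraph) (t : hom X Y) (m : hom Z Y) (m_inM : inM m).
Variables (lE : gE X -> gE Z) (lV : gV X -> gV Z).
Hypotheses (mlE : forall e, hE m (lE e) = hE t e) (mlV : forall v, hV m (lV v) = hV t v).

Lemma lift_hom_ok e : ginc (lE e) = lV @: ginc e.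
Proof.
apply: (imset_inj m_inM.2); rewrite -hom_ok mlE hom_ok -imset_comp.
by apply: eq_imset => v; rewrite /= mlV.
Qed.

Definition lift_hom : hom X Z := Hom lift_hom_ok.

Lemma lift_homK : heq (comp m lift_hom) t.
Proof. by split. Qed.

End LiftHom.

Section Subgraph.
Variables (X : uGraph) (SE : {set gE X}) (SV : {set gV X}).

Definition sub_edge (e : gE X) := (e \in SE) && (ginc e \subset SV).
Definition subE := {e : gE X | sub_edge e}.
Definition subV := {v : gV X | v \in SV}.
Definition sub_inc (e : subE) : {set subV} := [set v : subV | val v \in ginc (val e)].

Lemma sub_inc_val e : val @: sub_inc e = ginc (val e).
Proof.
apply/setP=> v; apply/imsetP/idP => [[w]|v_e]; first by rewrite inE => ? ->.
have vS : v \in SV := subsetP (andP (valP e)).2 v v_e.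
by exists (exist _ v vS); rewrite ?inE.
Qed.

Lemma sub_inc_ok e : 0 < #|sub_inc e| <= 2.
Proof. by rewrite -(card_imset _ val_inj) sub_inc_val ginc_ok. Qed.

Definition subgraph := UGraph sub_inc_ok.

Definition subgraph_incl : hom subgraph X :=
  @Hom subgraph X val val (fun e => esym (sub_inc_val e)).

Lemma subgraph_incl_inM : inM subgraph_incl.
Proof. by split; apply: val_inj. Qed.

End Subgraph.

(** * Pullbacks and pushouts along M *)

Definition pullback_cw A B C D (f : hom A B) (g : hom A C) (h : hom B D) (k : hom C D) :=
  set_pullback (hE f) (hE g) (hE h) (hE k) /\ set_pullback (hV f) (hV g) (hV h) (hV k).

Definition pushout_cw A B C D (m : hom A B) (n : hom A C) (g : hom B D) (f : hom C D) :=
  set_pushout (hE m) (hE n) (hE g) (hE f) /\ set_pushout (hV m) (hV n) (hV g) (hV f).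

Section Pullback.
Variables (B C D : uGraph) (h : hom B D) (k : hom C D) (h_inM : inM h).

Lemma pullback_cw_pullback A (f : hom A B) (g : hom A C) :
  pullback_cw f g h k -> is_pullback f g h k.
Proof.
case=> pbE pbV; have g_inM : inM g.
  by split; [apply: set_pullback_injr pbE h_inM.1 | apply: set_pullback_injr pbV h_inM.2].
case: pbE pbV => sqE exE uniqE [sqV exV uniqV].
split=> [|W x y [hxE hxV]]; first by split.
have [uE uEP] := fin_all_exists (fun e => exE _ _ (hxE e)).
have [uV uVP] := fin_all_exists (fun v => exV _ _ (hxV v)).
exists (lift_hom g_inM (fun e => (uEP e).2) (fun v => (uVP v).2)); split.
- by split=> z /=; [case: (uEP z) | case: (uVP z)].
- exact: lift_homK.
- move=> u' /heq_comp [fuE fuV] /heq_comp [guE guV]; split=> z /=.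
  + by case: (uEP z) => fz gz; apply: uniqE; rewrite ?fuE ?guE ?fz ?gz.
  + by case: (uVP z) => fz gz; apply: uniqV; rewrite ?fuV ?guV ?fz ?gz.
Qed.

Definition pb_graph :=
  subgraph [set e | hE k e \in codom (hE h)] [set v | hV k v \in codom (hV h)].

Definition pb_snd : hom pb_graph C := subgraph_incl _ _.

Lemma pb_edge_in (e : gE pb_graph) : hE k (val e) \in codom (hE h).
Proof. by have /andP[] := valP e; rewrite inE. Qed.

Lemma pb_vertex_in (v : gV pb_graph) : hV k (val v) \in codom (hV h).
Proof. by have := valP v; rewrite inE. Qed.

Definition pb_fst : hom pb_graph B :=
  lift_hom (t := comp k pb_snd) h_inM (fun e => f_iinv (pb_edge_in e))
    (fun v => f_iinv (pb_vertex_in v)).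

Lemma pb_graph_cw : pullback_cw pb_fst pb_snd h k.
Proof.
split; split=> [x | b c hbkc | x x' _ /val_inj] //=; try exact: f_iinv.
- have cV : ginc c \subset [set v | hV k v \in codom (hV h)].
    apply/subsetP=> v v_c; rewrite inE.
    have : hV k v \in hV k @: ginc c by apply: imset_f.
    by rewrite -hom_ok -hbkc hom_ok => /imsetP [w _ ->]; apply: codom_f.
  have cS : sub_edge [set e | hE k e \in codom (hE h)] [set v | hV k v \in codom (hV h)] c.
    by rewrite /sub_edge cV inE -hbkc codom_f.
  exists (exist _ c cS); split=> //; apply: h_inM.1.
  by rewrite /= f_iinv hbkc.
- have cS : c \in [set v | hV k v \in codom (hV h)] by rewrite inE -hbkc codom_f.
  exists (exist _ c cS); split=> //; apply: h_inM.2.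
  by rewrite /= f_iinv hbkc.
Qed.

Lemma pullbackP {A} {f : hom A B} {g : hom A C} :
  is_pullback f g h k <-> pullback_cw f g h k.
Proof.
split=> [pb | ]; last exact: pullback_cw_pullback.
have [u [/isoP [uE uV] /heq_comp [fuE fuV] /heq_comp [guE guV]]] :=
  pullback_iso (pullback_cw_pullback pb_graph_cw) pb.
have [pbE pbV] := pb_graph_cw.
split.
- by apply: (set_pullback_bij pbE uE) => x; apply: esym; [apply: fuE | apply: guE].
- by apply: (set_pullback_bij pbV uV) => x; apply: esym; [apply: fuV | apply: guV].
Qed.

End Pullback.

Lemma pushout_cw_pushout A B C D (m : hom A B) (n : hom A C) (g : hom B D) (f : hom C D) :
  pushout_cw m n g f -> is_pushout m n g f.
Proof.
case=> poE poV; have [sqE _ coverE _ _] := poE; have [sqV _ coverV _ _] := poV.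
split=> [|X x y [xyE xyV]]; first by split.
have [uE [ugE ufE]] := set_pushout_univ poE xyE.
have [uV [ugV ufV]] := set_pushout_univ poV xyV.
have ok d : ginc (uE d) = uV @: ginc d.
  case: (coverE d) => [[b <-]|[c <-]]; rewrite ?ugE ?ufE !hom_ok -imset_comp;
  by apply: eq_imset => v /=; rewrite ?ugV ?ufV.
exists (Hom ok); split.
- by split=> z /=; rewrite ?ugE ?ugV.
- by split=> z /=; rewrite ?ufE ?ufV.
- move=> u' /heq_comp [u'gE u'gV] /heq_comp [u'fE u'fV]; split=> z /=.
  + by case: (coverE z) => [[b <-]|[c <-]]; rewrite ?ugE ?ufE.
  + by case: (coverV z) => [[b <-]|[c <-]]; rewrite ?ugV ?ufV.
Qed.

(* The pushout of sets along an injection [m], as normal forms in [C + B]: a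
   point [inr b] with [b = m a] is represented by [inl (n a)]. *)
Section SetPushout.
Variables (A B C : finType) (m : A -> B) (n : A -> C).

Definition po_normal (s : C + B) : C + B :=
  if s is inr b then (if [pick a | m a == b] is Some a then inl (n a) else s) else s.

Lemma po_normal_idem s : po_normal (po_normal s) == po_normal s.
Proof. by case: s => [c|b] //=; case E: [pick a | m a == b] => [a|] //=; rewrite E. Qed.

Definition po_carrier := {s : C + B | po_normal s == s}.
Definition po_class (s : C + B) : po_carrier := exist _ (po_normal s) (po_normal_idem s).
Definition po_inB b := po_class (inr b).
Definition po_inC c := po_class (inl c).

Lemma set_pushout_po : injective m -> set_pushout m n po_inB po_inC.
Proof.
move=> m_inj; split.
- move=> a; apply: val_inj => /=.
  by case: pickP => [a' /eqP/m_inj -> | /(_ a)] //; rewrite eqxx.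
- by move=> c c' /(congr1 val) [].
- move=> [[c|b] s_nf]; [right; exists c | left; exists b]; apply: val_inj; exact/eqP.
- move=> b c /(congr1 val) /=.
  by case: pickP => [a /eqP ma _ | //]; exists a.
- move=> b b' /(congr1 val) /=; case: pickP => [a /eqP ma _ | _]; first by right; exists a.
  by case: pickP => [a _ // | _ [->]]; left.
Qed.

End SetPushout.

Section Pushout.
Variables (A B C : uGraph) (m : hom A B) (n : hom A C) (m_inM : inM m).

Definition po_vB := po_inB (hV m) (hV n).
Definition po_vC := po_inC (hV m) (hV n).

Definition po_inc (d : po_carrier (hE m) (hE n)) :=
  match val d with inl c => po_vC @: ginc c | inr b => po_vB @: ginc b end.

Lemma po_inc_ok d : 0 < #|po_inc d| <= 2.
Proof. by rewrite /po_inc; case: (val d) => x; apply: card_imset12; apply: ginc_ok. Qed.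

Definition po_graph := UGraph po_inc_ok.

Lemma po_hB_ok (b : gE B) : @ginc po_graph (po_inB (hE m) (hE n) b) = po_vB @: ginc b.
Proof.
rewrite /= /po_inc /=; case: pickP => [a /eqP <- | _] //=.
rewrite !hom_ok -!imset_comp; apply: eq_imset => v /=.
by have [sq _ _ _ _] := set_pushout_po (hV n) m_inM.2; rewrite /po_vB /po_vC sq.
Qed.

Definition po_hB : hom B po_graph := Hom po_hB_ok.
Definition po_hC : hom C po_graph :=
  @Hom C po_graph (po_inC (hE m) (hE n)) po_vC (fun c => erefl).

Lemma po_graph_cw : pushout_cw m n po_hB po_hC.
Proof. by split; apply: set_pushout_po; [apply: m_inM.1 | apply: m_inM.2]. Qed.

Lemma pushoutP {D} {g : hom B D} {f : hom C D} :
  is_pushout m n g f <-> pushout_cw m n g f.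
Proof.
split=> [po | ]; last exact: pushout_cw_pushout.
have [u [/isoP [uE uV] /heq_comp [ugE ugV] /heq_comp [ufE ufV]]] :=
  pushout_iso (pushout_cw_pushout po_graph_cw) po.
have [poE poV] := po_graph_cw.
split.
- by apply: (set_pushout_bij poE uE) => x; apply: esym; [apply: ugE | apply: ufE].
- by apply: (set_pushout_bij poV uV) => x; apply: esym; [apply: ugV | apply: ufV].
Qed.

End Pushout.

Lemma pullback_inM A B C D (f : hom A B) (g : hom A C) (h : hom B D) (k : hom C D) :
  is_pullback f g h k -> inM h -> inM g.
Proof.
move=> pb h_inM; have [pbE pbV] := (pullbackP _ h_inM).1 pb.
by split; [apply: set_pullback_injr pbE h_inM.1 | apply: set_pullback_injr pbV h_inM.2].
Qed.

Lemma pushout_inM A B C D (m : hom A B) (n : hom A C) (g : hom B D) (f : hom C D) :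
  is_pushout m n g f -> inM m -> inM f.
Proof. by move=> po m_inM; have [[_ ? _ _ _] [_ ? _ _ _]] := (pushoutP n m_inM).1 po. Qed.

Lemma pushout_van_kampen A B C D (m : hom A B) (n : hom A C) (g : hom B D) (f : hom C D) :
  inM m -> is_pushout m n g f -> M_VK m n g f.
Proof.
move=> m_inM /(pushoutP n m_inM) [poE poV].
move=> A' B' C' D' m' n' g' f' a b c d [topE topV] [maE maV] [naE naV] [gbE gbV] [fcE fcV]
  pbm pbn b_inM c_inM d_inM.
have [pbmE pbmV] := (pullbackP _ b_inM).1 pbm.
have [pbnE pbnV] := (pullbackP _ c_inM).1 pbn.
have m'_inM : inM m'.
  by split; [apply: set_pullback_injl pbmE m_inM.1 | apply: set_pullback_injl pbmV m_inM.2].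
have vkE := set_van_kampen poE b_inM.1 c_inM.1 topE maE naE gbE fcE pbmE pbnE.
have vkV := set_van_kampen poV b_inM.2 c_inM.2 topV maV naV gbV fcV pbmV pbnV.
split=> [/(pushoutP n' m'_inM) [/vkE [? ?] /vkV [? ?]] | ].
  by split; apply/(pullbackP _ d_inM); split.
case=> /(pullbackP _ d_inM) [? ?] /(pullbackP _ d_inM) [? ?].
by apply/(pushoutP n' m'_inM); split; [apply/vkE | apply/vkV].
Qed.

Lemma M_adhesive_uGraph : M_adhesive.
Proof.
split.
  move=> A B C m n m_inM; do 3!eexists.
  exact: pushout_cw_pushout (po_graph_cw n m_inM).
split.
  move=> B C D h k h_inM; do 3!eexists.
  exact: pullback_cw_pullback (pb_graph_cw k h_inM).
split; first exact: iso_inM.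
split; first by move=> G H K f g [fE fV] [gE gV]; split; apply: inj_comp.
split; first by move=> A B C D m n g f; apply: pushout_inM.
split; first by move=> A B C D f g h k; apply: pullback_inM.
exact: pushout_van_kampen.
Qed.

Lemma M_effective_unions_uGraph : M_effective_unions.
Proof.
move=> A B C D E b c g f g' f' b_inM _ _ _ g'_inM f'_inM
  /(pushoutP _ b_inM) [poE poV] /(pullbackP _ g'_inM) [pbE pbV] u
  /heq_comp [ugE ugV] /heq_comp [ufE ufV].
split; first exact: set_effective_union poE pbE g'_inM.1 f'_inM.1 ugE ufE.
exact: set_effective_union poV pbV g'_inM.2 f'_inM.2 ugV ufV.
Qed.

(** * Images, epimorphisms and subobjects *)

Lemma inj_surj_bij (T : Type) (U : finType) (f : T -> U) :
  injective f -> (forall y, exists x, f x = y) -> bijective f.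
Proof.
move=> f_inj /fin_all_exists [g gK].
by exists g => // x; apply: f_inj; rewrite gK.
Qed.

Section Image.
Variables (X Y : uGraph) (f : hom X Y).

Definition im_graph := subgraph [set e in codom (hE f)] [set v in codom (hV f)].
Definition im_incl : hom im_graph Y := subgraph_incl _ _.

Lemma im_edge_in e : sub_edge [set e in codom (hE f)] [set v in codom (hV f)] (hE f e).
Proof.
rewrite /sub_edge inE codom_f hom_ok.
by apply/subsetP=> _ /imsetP [v _ ->]; rewrite inE codom_f.
Qed.

Lemma im_vertex_in v : hV f v \in [set v in codom (hV f)].
Proof. by rewrite inE codom_f. Qed.

Definition im_corestr : hom X im_graph :=
  lift_hom (t := f) (m := im_incl) (subgraph_incl_inM _ _)
    (lE := fun e => Sub (hE f e) (im_edge_in e)) (lV := fun v => Sub (hV f v) (im_vertex_in v))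
    (fun e => erefl) (fun v => erefl).

Lemma im_corestr_surj :
  (forall z, exists x, hE im_corestr x = z) /\ (forall z, exists x, hV im_corestr x = z).
Proof.
split=> z.
- have /andP [] := valP z; rewrite inE => /codomP [x fx] _.
  by exists x; apply: val_inj; rewrite /= fx.
- have := valP z; rewrite inE => /codomP [x fx].
  by exists x; apply: val_inj; rewrite /= fx.
Qed.

End Image.

Lemma im_corestr_iso X Y (f : hom X Y) : inM f -> is_iso (im_corestr f).
Proof.
case=> fE_inj fV_inj; have [cE cV] := im_corestr_surj f.
apply/isoP; split; apply: inj_surj_bij => // x x' /(congr1 val) /=.
  exact: fE_inj.
exact: fV_inj.
Qed.

(* An epimorphism equalizes the two coprojections of the cokernel pair of its
   image, which the pushout glues only along that image. *)
Lemma epiP G H (e : hom G H) :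
  is_epi e <-> (forall z, exists x, hE e x = z) /\ (forall z, exists x, hV e x = z).
Proof.
split=> [e_epi | [sE sV] W u v [ueE ueV]]; last first.
  by split=> z; [case: (sE z) => x <-; apply: ueE | case: (sV z) => x <-; apply: ueV].
pose i := im_incl e; have i_inM : inM i := subgraph_incl_inM _ _.
have [[sqE _ _ glueE _] [sqV _ _ glueV _]] := po_graph_cw i i_inM.
have [eqE eqV] : heq (po_hB i i_inM) (po_hC i i).
  apply: e_epi; split=> x /=.
  - exact: sqE (hE (im_corestr e) x).
  - exact: sqV (hV (im_corestr e) x).
have [cE cV] := im_corestr_surj e.
split=> z.
- by have [y <-] := glueE _ _ (eqE z); have [x <-] := cE y; exists x.
- by have [y <-] := glueV _ _ (eqV z); have [x <-] := cV y; exists x.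
Qed.

Lemma epi_M_factorization_uGraph : epi_M_factorization.
Proof.
move=> X Y f; exists (im_graph f), (im_corestr f), (im_incl f); split.
- exact/epiP/im_corestr_surj.
- exact: subgraph_incl_inM.
- exact: lift_homK.
move=> Z e m /epiP [eE eV] m_inM /heq_comp [meE meV].
have [cE cV] := im_corestr_surj f.
have [sE sEK] := fin_all_exists cE; have [sV sVK] := fin_all_exists cV.
have miE z : hE m (hE e (sE z)) = hE (im_incl f) z by rewrite meE -[in RHS](sEK z).
have miV z : hV m (hV e (sV z)) = hV (im_incl f) z by rewrite meV -[in RHS](sVK z).
pose i := lift_hom m_inM miE miV.
have ieE x : hE i (hE (im_corestr f) x) = hE e x by apply: m_inM.1; rewrite miE meE.
have ieV x : hV i (hV (im_corestr f) x) = hV e x by apply: m_inM.2; rewrite miV meV.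
exists i; split.
- apply/isoP; split; apply: inj_surj_bij.
  + by move=> z z' /(congr1 (hE m)); rewrite !miE; apply: val_inj.
  + by move=> y; have [x <-] := eE y; exists (hE (im_corestr f) x).
  + by move=> z z' /(congr1 (hV m)); rewrite !miV; apply: val_inj.
  + by move=> y; have [x <-] := eV y; exists (hV (im_corestr f) x).
- by split=> x; [apply: ieE | apply: ieV].
- by split=> z; [apply: miE | apply: miV].
Qed.

Lemma finitary_uGraph : finitary.
Proof.
move=> X; pose T : finType := ({set gE X} * {set gV X})%type.
exists #|T|, (fun i => existT (fun A => hom A X) _
  (subgraph_incl (enum_val i).1 (enum_val i).2)).
split=> [i | A m m_inM]; first exact: subgraph_incl_inM.
exists (enum_rank (([set e in codom (hE m)], [set v in codom (hV m)]) : T)).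
rewrite enum_rankK /=; exists (im_corestr m).
by split; [exact: im_corestr_iso | exact: lift_homK].
Qed.

Definition empty_graph : uGraph :=
  @UGraph void void (fun e => match e with end) (fun e => match e with end).

Lemma M_initial_uGraph : has_M_initial.
Proof.
exists empty_graph => X; split=> [|i j _ _]; last by split=> [[]|[]].
by exists (@Hom empty_graph X (fun e => match e with end) (fun v => match v with end)
  (fun e => match e with end)); split=> [[]|[]].
Qed.

(** * Final pullback complements *)

Lemma set_pullback_sub (A B D : Type) (P : pred D) (a : A -> B) (b : B -> D)
    (r : A -> {z | P z}) :
  injective a -> injective b -> (forall x, val (r x) = b (a x)) ->
  (forall y, P (b y) -> exists x, a x = y) -> set_pullback a r b val.
Proof.
move=> a_inj b_inj rab Pba; split=> [x | y z byz | x x' /a_inj //]; first by rewrite rab.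
have [x axy] : exists x, a x = y by apply: Pba; rewrite byz (valP z).
by exists x; split=> //; apply: val_inj; rewrite rab axy.
Qed.

Lemma outside_or_in_codom (A B : finType) (D : eqType) (a : A -> B) (b : B -> D) (z : D) :
  (forall y, b y = z -> exists x, b (a x) = z) ->
  (z \notin codom b) || (z \in codom (b \o a)).
Proof.
move=> lift; case: (boolP (z \in codom b)) => //= /codomP [y /esym /lift [x <-]].
exact: codom_f (b \o a) x.
Qed.

Section FPC.
Variables (A B D : uGraph) (a : hom A B) (b : hom B D).

Definition fpc_edges := [set z | (z \notin codom (hE b)) || (z \in codom (hE b \o hE a))].
Definition fpc_vertices := [set z | (z \notin codom (hV b)) || (z \in codom (hV b \o hV a))].
Definition fpc_graph := subgraph fpc_edges fpc_vertices.
Definition fpc_incl : hom fpc_graph D := subgraph_incl _ _.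

Lemma fpc_vertex_in x : hV b (hV a x) \in fpc_vertices.
Proof. by rewrite inE (codom_f (hV b \o hV a) x) orbT. Qed.

Lemma fpc_edge_in x : sub_edge fpc_edges fpc_vertices (hE b (hE a x)).
Proof.
rewrite /sub_edge inE (codom_f (hE b \o hE a) x) orbT !hom_ok -imset_comp /=.
by apply/subsetP=> _ /imsetP [v _ ->]; apply: fpc_vertex_in.
Qed.

Definition fpc_res : hom A fpc_graph :=
  lift_hom (t := comp b a) (m := fpc_incl) (subgraph_incl_inM _ _)
    (lE := fun x => Sub (hE b (hE a x)) (fpc_edge_in x))
    (lV := fun x => Sub (hV b (hV a x)) (fpc_vertex_in x))
    (fun x => erefl) (fun x => erefl).

Lemma fpc_graph_FPC : inM a -> inM b -> is_FPC a b fpc_incl fpc_res.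
Proof.
move=> [aE_inj aV_inj] b_inM; have [bE_inj bV_inj] := b_inM; split.
  apply/(pullbackP _ b_inM); split; apply: set_pullback_sub => // y.
  - by case/andP; rewrite inE codom_f => /codomP [x /bE_inj ->]; exists x.
  - by rewrite inE codom_f => /codomP [x /bV_inj ->]; exists x.
move=> A' C' p q r /(pullbackP _ b_inM) [[sqE exE _] [sqV exV _]].
have rV v : hV r v \in fpc_vertices.
  rewrite inE; apply: outside_or_in_codom => y byr.
  by have [x [axy _]] := exV _ _ byr; exists (hV p x); rewrite -byr -axy.
have rE e : sub_edge fpc_edges fpc_vertices (hE r e).
  rewrite /sub_edge inE hom_ok; apply/andP; split.
    apply: outside_or_in_codom => y byr.
    by have [x [axy _]] := exE _ _ byr; exists (hE p x); rewrite -byr -axy.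
  by apply/subsetP=> _ /imsetP [v _ ->]; apply: rV.
exists (lift_hom (t := r) (m := fpc_incl) (subgraph_incl_inM _ _)
  (lE := fun e => Sub (hE r e) (rE e)) (lV := fun v => Sub (hV r v) (rV v))
  (fun e => erefl) (fun v => erefl)); split.
- exact: lift_homK.
- by split=> x; apply: val_inj; [exact: esym (sqE x) | exact: esym (sqV x)].
- by move=> s' [cs'E cs'V] _; split=> x; apply: val_inj; [exact: cs'E | exact: cs'V].
Qed.

End FPC.

Lemma pullback_comp_hid A B C D (f : hom A B) (g : hom A C) (h : hom B D) (k : hom C D) :
  inM h -> is_pullback f g h k -> is_pullback (comp f (hid A)) g h k.
Proof. by move=> h_inM /(pullbackP _ h_inM) pb; apply/(pullbackP _ h_inM). Qed.

Lemma FPC_endo_id A B C D (a : hom A B) (b : hom B D) (c : hom C D) (d : hom A C)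
    (v : hom C C) :
  inM b -> is_FPC a b c d -> heq (comp c v) c -> heq (comp v d) d -> heq v (hid C).
Proof.
move=> b_inM [pb U] cv vd.
have [u [_ _ u_uniq]] := U _ _ _ _ _ (pullback_comp_hid b_inM pb).
have [idE idV] : heq (hid C) u by apply: u_uniq; split.
by have [vE vV] := u_uniq _ cv vd; split=> x; [rewrite vE idE | rewrite vV idV].
Qed.

Lemma FPC_iso A B C C' D (a : hom A B) (b : hom B D) (c : hom C D) (d : hom A C)
    (c' : hom C' D) (d' : hom A C') :
  inM b -> is_FPC a b c d -> is_FPC a b c' d' ->
  exists s : hom C' C, is_iso s /\ heq (comp c s) c'.
Proof.
move=> b_inM fpc fpc'; have [pb U] := fpc; have [pb' U'] := fpc'.
have [s [cs sd _]] := U _ _ _ _ _ (pullback_comp_hid b_inM pb').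
have [w [c'w wd _]] := U' _ _ _ _ _ (pullback_comp_hid b_inM pb).
move/heq_comp: cs => [csE csV]; move/heq_comp: sd => /= [sdE sdV].
move/heq_comp: c'w => [cwE cwV]; move/heq_comp: wd => /= [wdE wdV].
exists s; split=> //; exists w; split.
- apply: (FPC_endo_id b_inM fpc'); split=> x /=;
  by rewrite ?csE ?cwE ?sdE ?wdE ?csV ?cwV ?sdV ?wdV.
- apply: (FPC_endo_id b_inM fpc); split=> x /=;
  by rewrite ?csE ?cwE ?sdE ?wdE ?csV ?cwV ?sdV ?wdV.
Qed.

Lemma FPCs_of_M_exist_uGraph : FPCs_of_M_exist.
Proof. by move=> A B D a b a_inM b_inM; do 3!eexists; apply: fpc_graph_FPC. Qed.

Lemma M_stable_under_FPC_uGraph : M_stable_under_FPC.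
Proof.
move=> A B C D a b c d a_inM b_inM fpc; have [pb _] := fpc.
split; last exact: pullback_inM pb b_inM.
have [s [/isoP [/bij_inj sE_inj /bij_inj sV_inj] /heq_comp [csE csV]]] :=
  FPC_iso b_inM (fpc_graph_FPC a_inM b_inM) fpc.
by split=> x y; rewrite -?csE -?csV => /val_inj; [apply: sE_inj | apply: sV_inj].
Qed.

Theorem mainTheorem1 :
  M_adhesive /\ finitary /\ has_M_initial /\ M_effective_unions /\
  epi_M_factorization /\ FPCs_of_M_exist /\ M_stable_under_FPC.
Proof.
split; first exact: M_adhesive_uGraph.
split; first exact: finitary_uGraph.
split; first exact: M_initial_uGraph.
split; first exact: M_effective_unions_uGraph.
split; first exact: epi_M_factorization_uGraph.
split; first exact: FPCs_of_M_exist_uGraph.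
exact: M_stable_under_FPC_uGraph.
Qed.
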